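(* Let $\mathcal{X}\subset\mathbb{R}^d$, $\mathcal{Y}=\{1,\dots,C\}$, and let $f_{\bm{\theta}}:\mathcal{X}\to\mathbb{R}^C$ be a score function with $F_{\bm{\theta}}(\bm{x})=\operatorname{argmax}_{c}[f_{\bm{\theta}}(\bm{x})]_c$. Let $z(\cdot)$ be any measurable mapping from $\mathcal{X}$ to $\mathcal{X}$ satisfying $$z(\bm{x})\in\operatorname*{argmax}_{\bm{x}'\in\mathcal{B}_p(\bm{x},\varepsilon)}\mathbbm{1}\big(F_{\bm{\theta}}(\bm{x})\neq F_{\bm{\theta}}(\bm{x}')\big)$$ for every $\bm{x}\in\mathcal{X}$. Then for every $\bm{x}\in\mathcal{X}$ and every label $Y\in\mathcal{Y}$, $$\mathbbm{1}\big\{\exists\,\bm{x}'\in\mathcal{B}_p(\bm{x},\varepsilon): F_{\bm{\theta}}(\bm{x})\neq F_{\bm{\theta}}(\bm{x}'),\ F_{\bm{\theta}}(\bm{x})=Y\big\}\le \mathbbm{1}\big\{F_{\bm{\theta}}(\bm{x})\neq F_{\bm{\theta}}(z(\bm{x})),\ Y\neq F_{\bm{\theta}}(z(\bm{x}))\big\}.$$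
   Context: $\mathcal{B}_p(\bm{x},\varepsilon)=\{\bm{x}'\in\mathcal{X}:\|\bm{x}-\bm{x}'\|_p\le\varepsilon\}$ for fixed $p$ and $\varepsilon>0$. $\mathbbm{1}\{\cdot\}$ is the indicator function, and a comma inside it denotes conjunction of conditions. *)

From HB Require Import structures.
From mathcomp Require Import all_boot all_order all_algebra.
From mathcomp Require Import all_classical all_reals all_analysis.
Set Implicit Arguments. Unset Strict Implicit. Unset Printing Implicit Defensive.
Import Order.TTheory GRing.Theory Num.Theory.
Import numFieldNormedType.Exports.
Local Open Scope classical_set_scope.
Local Open Scope ring_scope.

Section Defs.
Variable R : realType.

Definition lpnorm (d : nat) (p : \bar R) (v : 'rV[R]_d) : R :=
  match p with
  | EFin r => (\sum_(i < d) `|v ord0 i| `^ r) `^ r^-1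
  | +oo%E => \big[Num.max/0]_(i < d) `|v ord0 i|
  | -oo%E => 0
  end.

Definition lpball (d : nat) (X : set 'rV[R]_d) (p : \bar R) (x : 'rV[R]_d) (eps : R)
  : set 'rV[R]_d := [set x' | X x' /\ lpnorm p (x - x') <= eps].

(* predicted label: argmax_c [f x]_c, ties broken by the first maximiser (arg max) *)
Definition predict (d C : nat) (f : 'rV[R]_d -> 'I_C.+1 -> R) (x : 'rV[R]_d) : 'I_C.+1 :=
  [arg max_(c > ord0) f x c]%O.

Definition argmax_set (T : Type) (A : set T) (g : T -> R) : set T :=
  [set a | A a /\ forall b, A b -> g b <= g a].

Definition borel (d : nat) (A : set 'rV[R]_d) : Prop :=
  <<s [set B : set 'rV[R]_d | open B] >> A.

Definition measurable_map_on (d : nat) (X : set 'rV[R]_d) (z : 'rV[R]_d -> 'rV[R]_d) : Prop :=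
  (forall x, X x -> X (z x)) /\
  forall B, borel B -> borel (X `&` z @^-1` B).

End Defs.

From HB Require Import structures.
From mathcomp Require Import all_boot all_order all_algebra.
From mathcomp Require Import all_classical all_reals all_analysis.
Import Order.TTheory GRing.Theory Num.Theory.
Local Open Scope classical_set_scope.
Local Open Scope ring_scope.

(* z x maximises the indicator of a label flip over the ball, so as soon as
   some point of the ball flips the label of x, so does z x; and then
   Y = F x differs from F (z x). *)

Lemma ler_nat_asbool (R : numDomainType) (P Q : Prop) :
  (P -> Q) -> `[< P >]%:R <= `[< Q >]%:R :> R.
Proof.
move=> PQ; rewrite ler_nat.
by case: asboolP => [/PQ/asboolT -> | _].
Qed.

Lemma argmax_set_indicator (R : realType) (T : Type) (A : set T) (P : pred T) (a : T) :
  argmax_set A (fun b => (P b)%:R : R) a -> (exists2 b, A b & P b) -> P a.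
Proof.
move=> [_ a_max] [b Ab Pb].
by have := a_max b Ab; rewrite Pb; case: (P a); rewrite // ler10.
Qed.

Theorem lemma2 (R : realType) (d C : nat) (X : set 'rV[R]_d) (p : \bar R) (eps : R)
  (f : 'rV[R]_d -> 'I_C.+1 -> R) (z : 'rV[R]_d -> 'rV[R]_d) :
  (1 <= p)%E -> 0 < eps ->
  measurable_map_on X z ->
  (forall x, X x ->
     argmax_set (R:=R) (lpball X p x eps)
       (fun x' : 'rV[R]_d => (predict f x != predict f x')%:R : R) (z x)) ->
  forall x, X x -> forall Y : 'I_C.+1,
    (`[< exists2 x', lpball X p x eps x' &
           (predict f x != predict f x') /\ predict f x = Y >])%:R
    <= (`[< predict f x != predict f (z x) /\ Y != predict f (z x) >])%:R :> R.
Proof.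
move=> _ _ _ z_max x Xx Y; apply: ler_nat_asbool => -[x' x'_ball [flip FxY]].
have flip_z : predict f x != predict f (z x).
  by apply: argmax_set_indicator (z_max x Xx) _; exists x'.
by split; rewrite // -FxY.
Qed.
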